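(* Let $2\le r_1<r_2$ be integers and let $T=[h,q_1,q_2]\in\mathfrak{F}(n)$. For an integer $j\ge 3$, let $T_j$ be the starlike tree consisting of a central vertex to which $r_2$ pendant paths with $2$ edges each and one pendant path with $j$ edges are attached. Then $\rho(T)>\rho(T_j)$.
   Context: $\rho(G)$ denotes the spectral radius (largest eigenvalue of the adjacency matrix) of a graph $G$. For integers $h,q_1,q_2\ge 2$ and fixed integers $2\le r_1<r_2$, the tree $[h,q_1,q_2]$ is constructed as follows: take a vertex $u$; attach to $u$ a pendant path with $h$ edges; attach to $u$ a path with $q_1$ edges ending at a vertex $v_1$, and attach to $v_1$ exactly $r_1$ pendant paths with $2$ edges each; attach to $u$ a path with $q_2$ edges ending at a vertex $v_2$, and attach to $v_2$ exactly $r_2$ pendant paths with $2$ edges each. It has $n=1+h+q_1+q_2+2(r_1+r_2)$ vertices. $\mathfrak{F}(n)$ is the set of all such trees $[h,q_1,q_2]$ with $h,q_1,q_2\ge2$ and $h+q_1+q_2=n-1-2(r_1+r_2)$ (for the fixed $r_1,r_2$). *)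

From HB Require Import structures.
From mathcomp Require Import all_boot all_order all_algebra.
From mathcomp Require Import reals classical_sets.
Set Implicit Arguments. Unset Strict Implicit. Unset Printing Implicit Defensive.
Import Order.TTheory GRing.Theory Num.Theory.
Local Open Scope ring_scope.

(* Vertices of a graph on n vertices are 0, ..., n-1; a graph is given by a
   list of (undirected) edges as pairs of naturals. *)

(* pend s o l : a path with l edges attached at vertex s, whose new vertices
   are o, o+1, ..., o+l-1 (in order going away from s). *)
Definition pend (s o l : nat) : seq (nat * nat) :=
  [seq ((if k == 0 then s else o + k.-1)%N, (o + k)%N) | k <- iota 0 l].

Definition adjmx (R : realType) (n : nat) (E : seq (nat * nat)) : 'M[R]_n :=
  \matrix_(i < n, j < n)
     (((nat_of_ord i, nat_of_ord j) \in E) || ((nat_of_ord j, nat_of_ord i) \in E))%:R.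

(* Spectral radius = largest eigenvalue of the adjacency matrix
   (for a symmetric real matrix, the eigenvalues are real and finitely many,
   so the supremum is the maximum). *)
Definition spectral_radius (R : realType) (n : nat) (A : 'M[R]_n) : R :=
  sup [set x : R | eigenvalue A x].

(* Vertex 0 is u.
   Vertices 1..h : pendant path of length h at u.
   Vertices h+1..h+q1 : path of length q1 from u, ending at v1 = h+q1.
   Then r1 pendant P_2's at v1, then path of length q2 from u ending at
   v2 = h+q1+2 r1+q2, then r2 pendant P_2's at v2. *)
Definition treeF_edges (r1 r2 h q1 q2 : nat) : seq (nat * nat) :=
  let v1 := (h + q1)%N in
  let o2 := (1 + h + q1 + 2 * r1)%N in
  let v2 := (h + q1 + 2 * r1 + q2)%N in
  pend 0 1 h
  ++ pend 0 (1 + h) q1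
  ++ flatten [seq pend v1 (1 + h + q1 + 2 * k) 2 | k <- iota 0 r1]
  ++ pend 0 o2 q2
  ++ flatten [seq pend v2 (1 + v2 + 2 * k) 2 | k <- iota 0 r2].

Definition treeF_order (r1 r2 h q1 q2 : nat) : nat :=
  (1 + h + q1 + q2 + 2 * (r1 + r2))%N.

Definition starT_edges (r2 j : nat) : seq (nat * nat) :=
  flatten [seq pend 0 (1 + 2 * k) 2 | k <- iota 0 r2] ++ pend 0 (1 + 2 * r2) j.

Definition starT_order (r2 j : nat) : nat := (1 + 2 * r2 + j)%N.

From HB Require Import structures.
From mathcomp Require Import all_boot all_order all_algebra.
From mathcomp Require Import reals classical_sets.
From mathcomp Require Import zify ring lra.
From mathcomp Require Import sesquilinear spectral complex polyrcf.
Import Order.TTheory GRing.Theory Num.Theory.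
Local Open Scope ring_scope.

(* Let z in (0, 1) solve (r2 - 1) (z^4 + z^2) = 1 and lam = z + 1/z.  Bounding
   2 x_u x_v <= w x_u^2 + x_v^2 / w on every edge of T_j, with weights w chosen
   so that each vertex collects a total weight of at most lam, gives
   x^T A x <= lam |x|^2, hence rho(T_j) <= lam.  In [h, q1, q2], the branch at
   v2 and the path from v2 to u carry the vector for which these bounds are
   tight (z^d at distance d from v2, and b, b / lam on the pendant paths of v2);
   putting x_u / lam on the two other neighbours of u raises its Rayleigh
   quotient above lam, so rho(T_j) <= lam < rho([h, q1, q2]). *)

Section Rayleigh.
Local Open Scope sesquilinear_scope.

Lemma hermsymmx_eigenvalue_gt {C : numClosedFieldType} {n} (A : 'M[C]_n)
    (w : 'rV_n) (c : C) :
  A \is hermsymmx -> c \is Num.real ->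
  c * (w *m w^t*) 0 0 < (w *m A *m w^t*) 0 0 ->
  exists2 a, eigenvalue A a & c < a.
Proof.
move=> hA cR.
set P := spectralmx A; set d := spectral_diag A.
have /orthomx_spectralP eqA := hermitian_normalmx hA.
have Pu : P \is unitarymx by exact: spectral_unitarymx.
have dR := hermitian_spectral_diag_real hA.
rewrite -/P -/d invmx_unitary // in eqA.
set u := w *m P^t*.
have trmxC_mul m p (X : 'M[C]_(m, n)) (Y : 'M[C]_(n, p)) : (X *m Y)^t* = Y^t* *m X^t*.
  by rewrite trmx_mul map_mxM.
have -> : w *m A *m w^t* = u *m diag_mx d *m u^t*.
  by rewrite {1}eqA /u trmxC_mul trmxCK !mulmxA.
have -> : w *m w^t* = u *m u^t* by rewrite /u trmxC_mul trmxCK mulmxA mulmxKtV.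
rewrite !mxE => hlt.
(* The Rayleigh quotient is a convex combination of the eigenvalues [d 0 i]. *)
have [i ci] : exists i, c < d 0 i.
  apply/existsP; apply: contraLR hlt; rewrite negb_exists => /forallP dc.
  apply/negP/negP; rewrite le_gtF // mulr_sumr; apply: ler_sum => k _.
  have dk : d 0 k \is Num.real by exact: (mxOverP dR).
  rewrite mul_mx_diag !mxE mulrAC [c * _]mulrC ler_wpM2l ?mul_conjC_ge0 //.
  by rewrite real_leNgt ?dc.
exists (d 0 i) => //; apply/eigenvalueP; exists (delta_mx 0 i *m P).
  rewrite eqA !mulmxA mulmxtVK // scalemxAl; congr (_ *m _).
  apply/rowP => k; rewrite mul_mx_diag !mxE.
  by have [->|_] := eqVneq k i; rewrite eqxx /= ?mul1r ?mulr1 ?mul0r ?mulr0.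
rewrite mulmx_free_eq0 ?row_free_unit ?unitarymx_unit //.
by apply/eqP => /matrixP /(_ 0 i); rewrite !mxE !eqxx => /eqP; rewrite oner_eq0.
Qed.

Lemma symmetric_eigenvalue_gt {R : rcfType} {n} (A : 'M[R]_n) (v : 'rV_n) (c : R) :
  A^T = A -> c * (v *m v^T) 0 0 < (v *m A *m v^T) 0 0 ->
  exists2 a, eigenvalue A a & c < a.
Proof.
move=> As hlt; pose f := real_complex R.
have AC : map_mx f A \is hermsymmx.
  apply: realsym_hermsym; last by apply/mxOverP => i j; rewrite mxE complex_real.
  apply/is_hermitianmxP; rewrite expr0 scale1r; apply/matrixP => i j.
  by rewrite !mxE -[in LHS]As mxE.
have vC : (map_mx f v)^t* = map_mx f v^T.
  by apply/matrixP => i j; rewrite !mxE; exact: conjc_real.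
have [a Aa ca] : exists2 a, eigenvalue (map_mx f A) a & (c%:C)%C < a.
  apply: (hermsymmx_eigenvalue_gt _ (map_mx f v) _ AC); first by rewrite complex_real.
  by rewrite vC -!map_mxM !mxE -rmorphM ltcR; move: hlt; rewrite !mxE.
move: ca; rewrite ltcE /= => /andP [/eqP aR ca].
exists (complex.Re a) => //.
by move: Aa; case: a aR {ca} => x y /= ->; rewrite eigenvalue_map.
Qed.

End Rayleigh.

Lemma rowv_norm_gt0 {R : realDomainType} {n} (v : 'rV[R]_n) :
  v != 0 -> 0 < (v *m v^T) 0 0.
Proof.
move=> v0; have sq_ge0 j : 0 <= v 0 j * v^T j 0 by rewrite mxE; exact: sqr_ge0.
rewrite mxE lt_def sumr_ge0 ?andbT //; apply: contra v0 => /eqP vv0.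
apply/eqP/rowP => j; have := @psumr_eq0P _ _ _ _ (fun j _ => sq_ge0 j) vv0 j isT.
by rewrite !mxE => /eqP; rewrite mulf_eq0 orbb => /eqP.
Qed.

Lemma row_normE {R : semiRingType} {n} (f : nat -> R) :
  ((\row_(i < n) f i) *m (\row_(i < n) f i)^T) 0 0 = \sum_(i < n) f i ^+ 2.
Proof. by rewrite !mxE; apply: eq_bigr => i _; rewrite !mxE. Qed.

Lemma eigenvalue_le_rayleigh {R : realFieldType} {n} (A : 'M[R]_n) (c a : R) :
  (forall v : 'rV_n, (v *m A *m v^T) 0 0 <= c * (v *m v^T) 0 0) ->
  eigenvalue A a -> a <= c.
Proof.
move=> Ac /eigenvalueP [v Av v0].
by have := Ac v; rewrite Av -scalemxAl mxE ler_pM2r ?rowv_norm_gt0.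
Qed.

Lemma eigenvalue_le_spectral_radius {R : realType} {n} (A : 'M[R]_n) (a : R) :
  eigenvalue A a -> a <= spectral_radius A.
Proof.
apply: ub_le_sup; exists (cauchy_bound (char_poly A)) => x /=.
rewrite eigenvalue_root_char => /root_in_cauchy_bound.
by rewrite monic_neq0 ?char_poly_monic // in_itv /= => /(_ isT) /andP [_ /ltW].
Qed.

(* [0 <= c] is needed because the supremum of an empty set is 0. *)
Lemma spectral_radius_le {R : realType} {n} (A : 'M[R]_n) (c : R) :
  0 <= c -> (forall a, eigenvalue A a -> a <= c) -> spectral_radius A <= c.
Proof.
move=> c0 Ac; rewrite /spectral_radius.
have [->|/set0P ne] := eqVneq [set a : R | eigenvalue A a]%classic set0%classic.
  by rewrite sup0.
exact: ge_sup.
Qed.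

Definition ordered_edges (n : nat) (E : seq (nat * nat)) : bool :=
  uniq E && all (fun e => (e.1 < e.2 < n)%N) E.

Lemma natr_mem_uniq {R : semiRingType} {T : eqType} (s : seq T) (x : T) :
  uniq s -> (x \in s)%:R = \sum_(y <- s) (y == x)%:R :> R.
Proof.
move=> us; rewrite -count_uniq_mem // -sum1_count natr_sum big_mkcond /=.
by apply: eq_bigr => y _; case: (y == x).
Qed.

Lemma sum_ord2_delta {R : semiRingType} {n} (F : nat -> nat -> R) (e : nat * nat) :
  (e.1 < n)%N -> (e.2 < n)%N ->
  \sum_(i < n) \sum_(j < n) (e == (nat_of_ord i, nat_of_ord j))%:R * F i j = F e.1 e.2.
Proof.
case: e => a b /= an bn; rewrite pair_bigA (bigD1 (Ordinal an, Ordinal bn)) //= eqxx mul1r.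
rewrite big1 ?addr0 // => -[i j] /=; rewrite xpair_eqE -!val_eqE /= => ne.
by rewrite xpair_eqE eq_sym [b == _]eq_sym (negbTE ne) mul0r.
Qed.

Section AdjacencyMatrix.
Context {R : realType} {n : nat} {E : seq (nat * nat)}.

Lemma adjmx_sym : (adjmx R n E)^T = adjmx R n E.
Proof. by apply/matrixP => i j; rewrite !mxE orbC. Qed.

Hypothesis ordE : ordered_edges n E.

Lemma adjmxE (i j : 'I_n) : adjmx R n E i j =
  \sum_(e <- E) ((e == (nat_of_ord i, nat_of_ord j))%:R + (e == (nat_of_ord j, nat_of_ord i))%:R).
Proof.
case/andP: ordE => uE /allP ltE; rewrite mxE big_split /= -!natr_mem_uniq //.
case ij: (_ \in E); case ji: (_ \in E); rewrite ?addr0 ?add0r //.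
by move: (ltE _ ij) (ltE _ ji) => /= /andP [+ _] /andP [+ _]; lia.
Qed.

Lemma adjmx_quadratic_form (f : nat -> R) :
  ((\row_(i < n) f i) *m adjmx R n E *m (\row_(i < n) f i)^T) 0 0
  = 2 * \sum_(e <- E) f e.1 * f e.2.
Proof.
have ltE e : e \in E -> (e.1 < n)%N /\ (e.2 < n)%N.
  move=> eE; case/andP: ordE => _ /allP /(_ e eE) /andP [e12 e2n].
  by split=> //; exact: ltn_trans e12 e2n.
rewrite mxE (eq_bigr (fun j => \sum_(i < n) f i * adjmx R n E i j * f j)); last first.
  by move=> j _; rewrite !mxE big_distrl; apply: eq_bigr => i _; rewrite !mxE.
under eq_bigr => j _ do under eq_bigr => i _ do rewrite adjmxE mulr_sumr mulr_suml.
under eq_bigr => j _ do rewrite exchange_big.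
rewrite exchange_big mulr_sumr big_seq [RHS]big_seq; apply: eq_bigr => e /ltE [e1n e2n].
have mul_mid (x y z : R) : x * y * z = y * (x * z) by ring.
under eq_bigr => j _ do under eq_bigr => i _ do rewrite mulrDr mulrDl !mul_mid.
under eq_bigr => j _ do rewrite big_split /=.
rewrite big_split /= exchange_big (sum_ord2_delta (fun a b => f a * f b)) //.
by rewrite (sum_ord2_delta (fun a b => f b * f a)) //= [f e.2 * _]mulrC -mulr2n mulr_natl.
Qed.

Lemma adjmx_spectral_radius_le (c : R) : 0 <= c ->
  (forall f : nat -> R, 2 * \sum_(e <- E) f e.1 * f e.2 <= c * \sum_(i < n) f i ^+ 2) ->
  spectral_radius (adjmx R n E) <= c.
Proof.
move=> c0 Ec; apply: spectral_radius_le => // a; apply: eigenvalue_le_rayleigh => v.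
pose f k := oapp (v 0) 0 (insub k).
have -> : v = \row_(i < n) f i by apply/rowP => i; rewrite mxE /f valK.
by rewrite adjmx_quadratic_form row_normE.
Qed.

Lemma adjmx_spectral_radius_gt (c : R) (f : nat -> R) :
  c * \sum_(i < n) f i ^+ 2 < 2 * \sum_(e <- E) f e.1 * f e.2 ->
  c < spectral_radius (adjmx R n E).
Proof.
rewrite -row_normE -adjmx_quadratic_form => /(symmetric_eigenvalue_gt _ _ _ adjmx_sym).
by case=> a /eigenvalue_le_spectral_radius aR ca; exact: lt_le_trans ca aR.
Qed.

End AdjacencyMatrix.

Local Notation pend2s v base r :=
  (flatten [seq pend v (base + 2 * k) 2 | k <- iota 0 r]).

Lemma map_snd_pend s o l : map snd (pend s o l) = iota o l.
Proof. by rewrite /pend -map_comp -[o in RHS]addn0 iotaDl. Qed.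

Lemma map_snd_pend2s v base r : map snd (pend2s v base r) = iota base (2 * r).
Proof.
elim: r base => [//|r IHr] base.
have first_pend2 : pend2s v base 1 = pend v base 2.
  by transitivity (pend v (base + 2 * 0) 2 ++ [::]); rewrite // cats0 muln0 addn0.
rewrite (iotaD 0 1 r) map_cat flatten_cat first_pend2 map_cat map_snd_pend.
rewrite [(0 + 1)%N]addnC iotaDl -map_comp.
rewrite (eq_map (g := fun k => pend v (base + 2 + 2 * k) 2)); last by move=> k /=; congr pend; lia.
by rewrite IHr -iotaD mulnS.
Qed.

Lemma pend_increasing s o l : (s < o)%N -> all (fun e => e.1 < e.2)%N (pend s o l).
Proof. by move=> so; apply/allP => _ /mapP [k _ ->] /=; case: eqP => /= k0; lia. Qed.

Lemma pend2s_increasing v base r : (v < base)%N ->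
  all (fun e => e.1 < e.2)%N (pend2s v base r).
Proof.
move=> vb; apply/allP => e /flatten_mapP [k _ ek].
by apply: (allP (pend_increasing v (base + 2 * k) 2 _)) ek; lia.
Qed.

Lemma cat_iota a n b m : b = (a + n)%N -> iota a n ++ iota b m = iota a (n + m).
Proof. by move=> ->; rewrite iotaD. Qed.

Lemma ordered_edges_parents n E :
  map snd E = iota 1 n.-1 -> all (fun e => e.1 < e.2)%N E -> ordered_edges n E.
Proof.
move=> sndE /allP ltE; rewrite /ordered_edges (map_uniq (f := snd)) ?sndE ?iota_uniq //=.
apply/allP => e eE; rewrite ltE //=.
have : e.2 \in iota 1 n.-1 by rewrite -sndE map_f.
by rewrite mem_iota; case: (n) => [|m] /=; lia.
Qed.

Lemma treeF_ordered r1 r2 h q1 q2 :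
  ordered_edges (treeF_order r1 r2 h q1 q2) (treeF_edges r1 r2 h q1 q2).
Proof.
apply: ordered_edges_parents; rewrite /treeF_edges; last first.
  by rewrite !all_cat !pend_increasing ?pend2s_increasing //; lia.
rewrite !map_cat !map_snd_pend !map_snd_pend2s !catA !cat_iota; try lia.
by congr iota; rewrite /treeF_order; lia.
Qed.

Lemma starT_ordered r j : ordered_edges (starT_order r j) (starT_edges r j).
Proof.
apply: ordered_edges_parents; rewrite /starT_edges; last first.
  by rewrite all_cat pend_increasing ?pend2s_increasing.
by rewrite map_cat map_snd_pend map_snd_pend2s cat_iota //; congr iota; rewrite /starT_order; lia.
Qed.

Section EdgeSums.
Context {R : nmodType}.
Implicit Types (F : nat -> nat -> R) (G : nat -> R).

Lemma big_pend F s o l : \sum_(e <- pend s o l) F e.1 e.2 =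
  \sum_(0 <= k < l) F (if k == 0 then s else o + k.-1)%N (o + k)%N.
Proof. by rewrite big_map /index_iota subn0. Qed.

Lemma big_pend2s F v base r : \sum_(e <- pend2s v base r) F e.1 e.2 =
  \sum_(0 <= k < r) (F v (base + 2 * k)%N + F (base + 2 * k)%N (base + 2 * k + 1)%N).
Proof.
rewrite big_flatten big_map /index_iota subn0; apply: eq_bigr => k _.
by rewrite big_pend big_mkord !big_ord_recr big_ord0 /= add0r addn0 addn1.
Qed.

Lemma big_nat_shift G m j : \sum_(m <= i < m + j) G i = \sum_(0 <= k < j) G (m + k)%N.
Proof.
elim: j => [|j IHj]; first by rewrite addn0 !big_geq.
by rewrite addnS !big_nat_recr ?leq_addr //= IHj.
Qed.

Lemma big_nat_pairs G base r : \sum_(base <= i < base + 2 * r) G i =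
  \sum_(0 <= k < r) (G (base + 2 * k)%N + G (base + 2 * k + 1)%N).
Proof.
elim: r => [|r IHr]; first by rewrite muln0 addn0 !big_geq.
rewrite (_ : base + 2 * r.+1 = (base + 2 * r).+2)%N; last by lia.
rewrite !big_nat_recr //= ?IHr ?addrA ?addn1 //; lia.
Qed.

End EdgeSums.

Lemma big_pend_head {R : semiRingType} (f : nat -> R) s o l : (0 < l)%N ->
  (forall k, (0 < k < l)%N -> f (o + k)%N = 0) ->
  \sum_(0 <= k < l) f (if k == 0 then s else o + k.-1)%N * f (o + k)%N = f s * f o.
Proof.
move=> l0 f0; rewrite big_ltn // addn0 big1_seq ?addr0 // => k /andP [_].
by rewrite mem_index_iota => /f0 ->; rewrite mulr0.
Qed.

Section StarlikeBound.
Context {R : realFieldType}.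
Implicit Types (f : nat -> R) (a b x y z lam : R).

Lemma amgm_weighted a x y : 0 < a -> 2 * (x * y) <= a * x ^+ 2 + y ^+ 2 / a.
Proof.
move=> a0; rewrite -subr_ge0 (_ : _ - _ = (a * x - y) ^+ 2 / a).
  by rewrite divr_ge0 ?sqr_ge0 ?ltW.
by field; rewrite gt_eqF.
Qed.

Lemma pend2s_form_le f v base r b lam : 0 < b -> 0 < lam ->
  2 * \sum_(0 <= k < r) (f v * f (base + 2 * k)%N
                         + f (base + 2 * k)%N * f (base + 2 * k + 1)%N)
  <= r%:R * b * f v ^+ 2 + (b^-1 + lam^-1) * \sum_(0 <= k < r) f (base + 2 * k)%N ^+ 2
     + lam * \sum_(0 <= k < r) f (base + 2 * k + 1)%N ^+ 2.
Proof.
move=> b0 lam0; apply: le_trans (_ : \sum_(0 <= k < r) (b * f v ^+ 2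
    + (b^-1 + lam^-1) * f (base + 2 * k)%N ^+ 2 + lam * f (base + 2 * k + 1)%N ^+ 2) <= _).
  have lamV0 : 0 < lam^-1 by rewrite invr_gt0.
  rewrite mulr_sumr; apply: ler_sum => k _.
  have := amgm_weighted b (f v) (f (base + 2 * k)%N) b0.
  have := amgm_weighted _ (f (base + 2 * k)%N) (f (base + 2 * k + 1)%N) lamV0.
  by rewrite invrK; lra.
rewrite !big_split /= -!mulr_sumr sumr_const_nat subn0 !mulrnAr -mulr_natl.
by rewrite le_eqVlt; apply/orP; left; apply/eqP; ring.
Qed.

Lemma big_pend_parents_sqr f s o l :
  \sum_(0 <= k < l) f (if k == 0 then s else o + k.-1)%N ^+ 2
  <= f s ^+ 2 + \sum_(0 <= k < l) f (o + k)%N ^+ 2.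
Proof.
case: l => [|l]; first by rewrite !big_geq // addr0 sqr_ge0.
by rewrite big_nat_recl //= lerD2l [X in _ <= X]big_nat_recr //= lerDl sqr_ge0.
Qed.

Lemma pend_form_le f s o l z : 0 < z ->
  2 * \sum_(0 <= k < l) f (if k == 0 then s else o + k.-1)%N * f (o + k)%N
  <= z * f s ^+ 2 + (z + z^-1) * \sum_(0 <= k < l) f (o + k)%N ^+ 2.
Proof.
move=> z0; apply: le_trans (_ : z * \sum_(0 <= k < l) f (if k == 0 then s else o + k.-1)%N ^+ 2
    + z^-1 * \sum_(0 <= k < l) f (o + k)%N ^+ 2 <= _).
  rewrite !mulr_sumr -big_split; apply: ler_sum => k _.
  have := amgm_weighted z (f (if k == 0 then s else o + k.-1)%N) (f (o + k)%N) z0.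
  by rewrite [_ / z]mulrC.
rewrite mulrDl addrA -mulrDr lerD2r.
by apply: ler_wpM2l; [exact: ltW | exact: big_pend_parents_sqr].
Qed.

Lemma starT_normE f r j : \sum_(i < starT_order r j) f i ^+ 2 =
  f 0%N ^+ 2 + \sum_(0 <= k < r) f (1 + 2 * k)%N ^+ 2
  + \sum_(0 <= k < r) f (1 + 2 * k + 1)%N ^+ 2 + \sum_(0 <= k < j) f (1 + 2 * r + k)%N ^+ 2.
Proof.
rewrite /starT_order -(big_mkord xpredT (fun i => f i ^+ 2)) big_ltn; last by lia.
rewrite (big_cat_nat _ (n := (1 + 2 * r)%N)) ?leq_addr //=.
by rewrite big_nat_pairs (big_nat_shift _ (1 + 2 * r)) big_split !addrA.
Qed.

Lemma starT_form_le f r j z b : 0 < z -> 0 < b ->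
  r%:R * b + z = z + z^-1 -> b^-1 + (z + z^-1)^-1 = z + z^-1 ->
  2 * \sum_(e <- starT_edges r j) f e.1 * f e.2
  <= (z + z^-1) * \sum_(i < starT_order r j) f i ^+ 2.
Proof.
set lam := z + z^-1 => z0 b0 centre middle.
have lam0 : 0 < lam by rewrite addr_gt0 ?invr_gt0.
rewrite big_cat /= (big_pend2s (fun p q => f p * f q)) (big_pend (fun p q => f p * f q)) /=.
rewrite starT_normE mulrDr.
have := pend2s_form_le f 0 1 r _ _ b0 lam0.
have := pend_form_le f 0 (1 + 2 * r) j _ z0.
have := congr1 ( *%R^~ (f 0%N ^+ 2)) centre.
have := congr1 ( *%R^~ (\sum_(0 <= k < r) f (1 + 2 * k)%N ^+ 2)) middle.
rewrite /= -/lam; lra.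
Qed.

End StarlikeBound.

Section TreeTestVector.
Context {R : realFieldType}.
Variables (r1 h q1 q2 : nat) (t s b c z : R).
Hypotheses (h_gt0 : (0 < h)%N) (q1_gt0 : (0 < q1)%N) (q2_gt0 : (0 < q2)%N).

Let o2 := (1 + h + q1 + 2 * r1)%N.

(* Vertex [o2] starts the q2-path, which ends at v2 = o2 + q2 - 1: the vector is
   t at u, s at the first vertices of the h- and q1-paths, z ^+ d at distance d
   from v2 on the q2-path, alternately b and c on the pendant paths of v2. *)
Definition treeF_test (i : nat) : R :=
  if (i < o2)%N then
    if i == 0 then t else if (i == 1) || (i == 1 + h) then s else 0
  else if (i < o2 + q2)%N then z ^+ (o2 + q2 - 1 - i)
  else if odd (i - (o2 + q2)) then c else b.
Local Notation g := treeF_test.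

Ltac unfold_test := rewrite /g; repeat (case: ifP => ?; try (exfalso; lia)).

Lemma treeF_test_vanishes i : i != 0 -> i != 1 -> i != (1 + h)%N -> (i < o2)%N -> g i = 0.
Proof. by move=> *; unfold_test. Qed.

Lemma treeF_test0 : g 0 = t. Proof. by unfold_test. Qed.

Lemma treeF_test1 : g 1 = s. Proof. by unfold_test. Qed.

Lemma treeF_test1h : g (1 + h) = s. Proof. by unfold_test. Qed.

Lemma treeF_test_path k : (k < q2)%N -> g (o2 + k) = z ^+ (q2 - 1 - k).
Proof. by move=> ?; unfold_test; congr (_ ^+ _); lia. Qed.

Lemma treeF_test_leg1 k : g (o2 + q2 + 2 * k) = b.
Proof. by rewrite /g addKn oddM andFb !ifF //; lia. Qed.

Lemma treeF_test_leg2 k : g (o2 + q2 + 2 * k + 1) = c.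
Proof. by rewrite /g -addnA addKn addn1 oddS oddM andFb !ifF //; lia. Qed.

Lemma treeF_test_sqr_vanishes m n : (1 < m)%N -> (n <= 1 + h \/ 1 + h < m)%N ->
  (n <= o2)%N -> \sum_(m <= i < n) g i ^+ 2 = 0.
Proof.
move=> m1 mh no2; rewrite big1_seq // => i /andP [_].
by rewrite mem_index_iota => /andP [mi i_n]; rewrite treeF_test_vanishes ?expr0n //; lia.
Qed.

Lemma treeF_test_normE r2 :
  \sum_(i < treeF_order r1 r2 h q1 q2) g i ^+ 2 =
  t ^+ 2 + s ^+ 2 + s ^+ 2 + \sum_(0 <= k < q2) (z ^+ (q2 - 1 - k)) ^+ 2
  + r2%:R * (b ^+ 2 + c ^+ 2).
Proof.
rewrite /treeF_order -(big_mkord xpredT (fun i => g i ^+ 2)).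
rewrite (_ : 1 + h + q1 + q2 + 2 * (r1 + r2) = o2 + q2 + 2 * r2)%N; last by rewrite /o2; lia.
set N := (o2 + q2 + 2 * r2)%N.
have [lt0N lt1N le2h lthN] : [/\ 0 < N, 1 < N, 2 <= 1 + h & 1 + h < N]%N.
  by rewrite /N /o2; split; lia.
have [lth_o2 le_o2 le_q2] : [/\ 1 + h < o2, o2 <= o2 + q2 & o2 + q2 <= N]%N.
  by rewrite /N /o2; split; lia.
rewrite (big_ltn lt0N) (big_ltn lt1N) (big_cat_nat le2h (ltnW lthN)) (big_ltn lthN).
rewrite (big_cat_nat lth_o2 (leq_trans le_o2 le_q2)) (big_cat_nat le_o2 le_q2).
rewrite treeF_test0 treeF_test1 treeF_test1h.
have -> : \sum_(2 <= i < 1 + h) g i ^+ 2 = 0 by apply: treeF_test_sqr_vanishes; lia.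
have -> : \sum_((1 + h).+1 <= i < o2) g i ^+ 2 = 0 by apply: treeF_test_sqr_vanishes; lia.
rewrite big_nat_pairs big_nat_shift.
have -> : \sum_(0 <= k < q2) g (o2 + k)%N ^+ 2 = \sum_(0 <= k < q2) (z ^+ (q2 - 1 - k)) ^+ 2.
  by apply: eq_big_nat => k /andP [_ kq2]; rewrite treeF_test_path.
have -> : \sum_(0 <= k < r2) (g (o2 + q2 + 2 * k)%N ^+ 2 + g (o2 + q2 + 2 * k + 1)%N ^+ 2)
    = r2%:R * (b ^+ 2 + c ^+ 2).
  under eq_bigr do rewrite treeF_test_leg1 treeF_test_leg2.
  by rewrite sumr_const_nat subn0 mulr_natl.
by rewrite /= !add0r !addrA.
Qed.

Lemma treeF_test_edgeE r2 : t = z ^+ q2 ->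
  \sum_(e <- treeF_edges r1 r2 h q1 q2) g e.1 * g e.2 =
  t * s + t * s + \sum_(0 <= k < q2) z ^+ (q2 - k) * z ^+ (q2 - 1 - k)
  + r2%:R * (b + b * c).
Proof.
move=> tE; pose F p q := g p * g q.
rewrite /treeF_edges !big_cat /= !(big_pend F) !(big_pend2s F) /F.
rewrite (big_pend_head _ 0 1 h) ?(big_pend_head _ 0 (1 + h) q1) //; first last.
- by move=> k /andP [k0 kh]; apply: treeF_test_vanishes; rewrite /o2; lia.
- by move=> k /andP [k0 kq1]; apply: treeF_test_vanishes; rewrite /o2; lia.
rewrite treeF_test0 treeF_test1 treeF_test1h.
have -> : \sum_(0 <= k < r1) (g (h + q1)%N * g (1 + h + q1 + 2 * k)%N
    + g (1 + h + q1 + 2 * k)%N * g (1 + h + q1 + 2 * k + 1)%N) = 0.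
  rewrite big1_seq // => k /andP [_]; rewrite mem_index_iota => kr1.
  by rewrite (treeF_test_vanishes (1 + h + q1 + 2 * k)%N) ?mulr0 ?mul0r ?addr0 //; rewrite /o2; lia.
have -> : \sum_(0 <= k < q2) g (if k == 0 then 0 else 1 + h + q1 + 2 * r1 + k.-1)%N
    * g (1 + h + q1 + 2 * r1 + k)%N = \sum_(0 <= k < q2) z ^+ (q2 - k) * z ^+ (q2 - 1 - k).
  apply: eq_big_nat => k /andP [_ kq2]; rewrite (treeF_test_path _ kq2).
  case: eqP => [->|k0]; first by rewrite treeF_test0 tE !subn0.
  by rewrite (treeF_test_path k.-1); [congr (_ ^+ _ * _) | ]; lia.
have -> : \sum_(0 <= k < r2) (g (h + q1 + 2 * r1 + q2)%N * g (1 + (h + q1 + 2 * r1 + q2) + 2 * k)%N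
    + g (1 + (h + q1 + 2 * r1 + q2) + 2 * k)%N * g (1 + (h + q1 + 2 * r1 + q2) + 2 * k + 1)%N)
    = r2%:R * (b + b * c).
  rewrite (_ : 1 + (h + q1 + 2 * r1 + q2) = o2 + q2)%N; last by rewrite /o2; lia.
  rewrite (_ : h + q1 + 2 * r1 + q2 = o2 + (q2 - 1))%N; last by rewrite /o2; lia.
  have -> : g (o2 + (q2 - 1)) = 1 by rewrite treeF_test_path ?subnn //; lia.
  under eq_bigr do rewrite treeF_test_leg1 treeF_test_leg2 mul1r.
  by rewrite sumr_const_nat subn0 mulr_natl.
by rewrite add0r !addrA.
Qed.

End TreeTestVector.

Lemma geometric_path_identity {R : fieldType} (z : R) q : z != 0 ->
  2 * \sum_(0 <= i < q) z ^+ i.+1 * z ^+ i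
  - (z + z^-1) * (\sum_(0 <= i < q) (z ^+ i) ^+ 2 + (z ^+ q) ^+ 2)
  = - z^-1 - (z ^+ q) ^+ 2 * z.
Proof.
move=> z0; elim: q => [|q IHq]; first by rewrite !big_geq // expr0; field.
rewrite !big_nat_recr //=.
set A := \sum_(0 <= i < q) _ in IHq *; set B := \sum_(0 <= i < q) _ in IHq *.
transitivity (2 * A - (z + z^-1) * (B + (z ^+ q) ^+ 2)
  + (2 * (z ^+ q.+1 * z ^+ q) - (z + z^-1) * (z ^+ q.+1) ^+ 2)); first by ring.
by rewrite IHq (exprS z q); field.
Qed.

Lemma treeF_form_gt {R : realFieldType} r1 r2 h q1 q2 (z b : R) :
  (0 < h)%N -> (0 < q1)%N -> (0 < q2)%N -> 0 < z -> z < 1 -> 0 < b ->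
  r2%:R * b + z = z + z^-1 -> b^-1 + (z + z^-1)^-1 = z + z^-1 ->
  exists f : nat -> R,
    (z + z^-1) * \sum_(i < treeF_order r1 r2 h q1 q2) f i ^+ 2
    < 2 * \sum_(e <- treeF_edges r1 r2 h q1 q2) f e.1 * f e.2.
Proof.
set lam := z + z^-1 => h0 q10 q20 z0 z1 b0 centre middle.
have zn0 : z != 0 by rewrite gt_eqF.
have lam0 : 0 < lam by rewrite addr_gt0 ?invr_gt0.
pose t := z ^+ q2; pose s := t / lam; pose c := b / lam.
exists (treeF_test r1 h q1 q2 t s b c z).
rewrite treeF_test_normE ?treeF_test_edgeE //.
have := geometric_path_identity z q2 zn0; rewrite -/lam -/t.
have -> : \sum_(0 <= i < q2) z ^+ i.+1 * z ^+ i
          = \sum_(0 <= k < q2) z ^+ (q2 - k) * z ^+ (q2 - 1 - k).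
  by rewrite big_nat_rev; apply: eq_big_nat => i /andP [_ iq]; congr (z ^+ _ * z ^+ _); lia.
have -> : \sum_(0 <= i < q2) (z ^+ i) ^+ 2 = \sum_(0 <= k < q2) (z ^+ (q2 - 1 - k)) ^+ 2.
  by rewrite big_nat_rev; apply: eq_big_nat => i /andP [_ iq]; congr (z ^+ _ ^+ _); lia.
have t0 : 0 < t by rewrite exprn_gt0.
have s0 : 0 < s by rewrite divr_gt0.
have lam_s : lam * s = t by rewrite mulrC divfK ?gt_eqF.
have lam_c : lam * c = b by rewrite mulrC divfK ?gt_eqF.
have lam_b : lam * b = 1 + c by rewrite -{1}middle mulrDl mulVf ?gt_eqF // mulrC.
have r2_b : r2%:R * b = z^-1 by apply: (addIr z); rewrite centre addrC.
have legs : lam * (r2%:R * (b ^+ 2 + c ^+ 2)) = r2%:R * b + 2 * (r2%:R * (b * c)).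
  transitivity (r2%:R * (b * (lam * b) + c * (lam * c))); first by ring.
  by rewrite lam_b lam_c; ring.
have lam_s2 : lam * s ^+ 2 = t * s by rewrite expr2 mulrA lam_s.
(* Everything cancels except the gain 2 t s - t^2 z of u over its two extra
   neighbours. *)
have gain : 2 * (t * s) - t ^+ 2 * z = t * s * (1 - z ^+ 2).
  have lam_z : lam * z = z ^+ 2 + 1 by rewrite /lam mulrDl mulVf // expr2.
  have -> : t ^+ 2 * z = t * s * (lam * z) by rewrite expr2 -{2}lam_s; ring.
  by rewrite lam_z; ring.
have gain_gt0 : 0 < t * s * (1 - z ^+ 2).
  by apply: mulr_gt0; [exact: mulr_gt0 | rewrite subr_gt0 expr2; nra].
lra.
Qed.

Lemma exists_quartic_root {R : rcfType} (a : R) : 1 <= a ->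
  exists z, [/\ 0 < z, z < 1 & a * (z ^+ 4 + z ^+ 2) = 1].
Proof.
move=> a1; have a0 : 0 < a by lra.
pose S := Num.sqrt (1 + 4 / a).
have S2 : S ^+ 2 = 1 + 4 / a by rewrite sqr_sqrtr // addr_ge0 // divr_ge0 // ltW.
have S0 : 0 <= S by exact: sqrtr_ge0.
have [a4_gt0 a4_le4] : 0 < 4 / a /\ 4 / a <= 4.
  by rewrite divr_gt0 // ler_pdivrMr // ler_peMr //; split=> //; lra.
have [S1 S3] : 1 < S /\ S < 3 by split; nra.
(* w = z ^+ 2 is the positive root of w ^+ 2 + w = a^-1. *)
pose w := (S - 1) / 2.
have [w0 w1] : 0 < w /\ w < 1.
  by split; rewrite /w ?divr_gt0 ?ltr_pdivrMr //; lra.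
exists (Num.sqrt w); have w2 : Num.sqrt w ^+ 2 = w by rewrite sqr_sqrtr // ltW.
split; first by rewrite sqrtr_gt0.
  by rewrite -(ltr_pXn2r (_ : 0 < 2)%N) ?nnegrE ?sqrtr_ge0 // w2 expr1n.
rewrite (_ : 4 = 2 * 2)%N // exprM w2 /w.
have -> : ((S - 1) / 2) ^+ 2 + (S - 1) / 2 = (S ^+ 2 - 1) / 4 by field.
by rewrite S2; field; lra.
Qed.

Lemma exists_balanced_weights {R : rcfType} (r : nat) : (2 <= r)%N ->
  exists z b : R, [/\ 0 < z, z < 1, 0 < b,
    r%:R * b + z = z + z^-1 & b^-1 + (z + z^-1)^-1 = z + z^-1].
Proof.
move=> r2; have r1 : 1 <= r%:R - 1 :> R.
  by rewrite lerBrDr (_ : 1 + 1 = 2%:R) // ler_nat.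
have [z [z0 z1 root]] := exists_quartic_root _ r1.
have r0 : 0 < r%:R :> R by rewrite ltr0n; lia.
have zn0 : z != 0 by rewrite gt_eqF.
exists z, (r%:R * z)^-1; split=> //; first by rewrite invr_gt0 mulr_gt0.
  by field; rewrite zn0 gt_eqF.
rewrite invrK; apply/eqP; rewrite -subr_eq0; apply/eqP.
have z2 : z ^+ 2 + 1 != 0 by rewrite gt_eqF // addr_gt0 // exprn_gt0.
rewrite (_ : _ - _ = ((r%:R - 1) * (z ^+ 4 + z ^+ 2) - 1) / (z * (z ^+ 2 + 1))).
  by rewrite root subrr mul0r.
by field; rewrite z2 zn0.
Qed.

Theorem theorem2p1 (R : realType) (r1 r2 h q1 q2 j : nat) :
  (2 <= r1)%N -> (r1 < r2)%N ->
  (2 <= h)%N -> (2 <= q1)%N -> (2 <= q2)%N -> (3 <= j)%N ->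
  spectral_radius (adjmx R (starT_order r2 j) (starT_edges r2 j))
  < spectral_radius (adjmx R (treeF_order r1 r2 h q1 q2) (treeF_edges r1 r2 h q1 q2)).
Proof.
(* The bound rho(T_j) <= z + z^-1 holds for every j. *)
move=> r1_ge2 r1_lt_r2 h_ge2 q1_ge2 q2_ge2 _.
have [z [b [z0 z1 b0 centre middle]]] := @exists_balanced_weights R r2 (ltn_trans r1_ge2 r1_lt_r2).
have lam0 : 0 <= z + z^-1 by rewrite addr_ge0 ?invr_ge0 ?ltW.
apply: (le_lt_trans (adjmx_spectral_radius_le (starT_ordered r2 j) _ lam0 _)).
  by move=> f; exact: (starT_form_le f r2 j z b z0 b0 centre middle).
have [f form_gt] := treeF_form_gt r1 r2 h q1 q2 z b (ltnW h_ge2) (ltnW q1_ge2) (ltnW q2_ge2)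
  z0 z1 b0 centre middle.
exact: adjmx_spectral_radius_gt (treeF_ordered r1 r2 h q1 q2) _ _ form_gt.
Qed.
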